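(* For every $\mathsf{C\text{-}RASP}_+$ program of size $n$, depth $d$, precision $p$ and girth $g$, there is an equivalent decomposed $\mathsf{C\text{-}RASP}_+$ program of size $O(n\,2^{\mathrm{poly}(p,g,d)})$, depth $O(d)$ and precision $O(p)$.
   Context: $\mathsf{C\text{-}RASP}_+$ formulas over a finite alphabet $\Sigma$: $\phi ::= \sigma \mid \neg\phi \mid \phi_1\wedge\phi_2 \mid \sum_{t\in\mathcal T}\alpha_t t\sim k$, terms $t ::= \#[\phi] \mid c$, with $\sigma\in\Sigma$, $\alpha_t,k,c\in\mathbb{N}$, ${\sim}\in\{\ge,>,=,<,\le\}$. Semantics at position $i$ of $w$: $w,i\models\sigma$ iff $w_i=\sigma$; Boolean connectives as usual; $\#[\phi]$ evaluates to $|\{j\in[1,i]: w,j\models\phi\}|$, $c$ to $c$, and comparisons are integer comparisons; $w\models\phi$ iff $w,|w|\models\phi$. Two programs are equivalent if they define the same language. Programs are straight-line (DAG) representations $(\phi_1,\dots,\phi_m)$ where $\phi_i$ may refer to earlier $\phi_j$; size is the total number of symbols with constants in binary and each reference counted as 1. Depth: $\mathrm{dp}(\sigma)=\mathrm{dp}(c)=0$, $\mathrm{dp}(\neg\phi)=\mathrm{dp}(\phi)$, $\mathrm{dp}(\phi_1\wedge\phi_2)=\max(\mathrm{dp}(\phi_1),\mathrm{dp}(\phi_2))$, $\mathrm{dp}(\#[\phi])=\mathrm{dp}(\phi)+1$, and the depth of a comparison is the maximal depth of its terms; the depth of a program is the maximum depth of its lines. The precision of a program is the number of bits needed to encode its largest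 constant; its girth is the maximum number of summands in any sum occurring in it. A program is decomposed if every counting formula in it has the form $\#[\phi]\ge c$ with $\phi$ decomposed and $c\in\mathbb N$. *)

From mathcomp Require Import all_boot.
Set Implicit Arguments. Unset Strict Implicit. Unset Printing Implicit Defensive.

Inductive cmp := CGe | CGt | CEq | CLt | CLe.

Definition cmp_eval (o : cmp) (m k : nat) : bool :=
  match o with
  | CGe => k <= m | CGt => k < m | CEq => m == k | CLt => m < k | CLe => m <= k
  end.

Definition is_CGe (o : cmp) : bool := if o is CGe then true else false.

Inductive term (F : Type) := TCount of F | TConst of nat.
Arguments TConst {F}.

Section CRASP.
Variable Sigma : eqType.

(* formulas; FRef j refers to line j (0-indexed) of the surrounding program.
   FCmp ts o k  is  sum_{(a,t) in ts} a * t  o  k. *)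
Inductive form :=
| FLet of Sigma
| FNot of form
| FAnd of form & form
| FRef of nat
| FCmp of seq (nat * term form) & cmp & nat.

Definition prog := seq form.

(* env j i = truth value of line j at position i *)
Fixpoint evf (env : nat -> nat -> bool) (w : seq Sigma) (f : form) (i : nat)
  {struct f} : bool :=
  match f with
  | FLet a => (0 < i <= size w) && (nth a w i.-1 == a)
  | FNot g => ~~ evf env w g i
  | FAnd g h => evf env w g i && evf env w h i
  | FRef j => env j i
  | FCmp ts o k =>
      let fix sumv (ts : seq (nat * term form)) : nat :=
        match ts with
        | [::] => 0
        | (a, TCount g) :: ts' =>
            a * count (fun j => evf env w g j) (iota 1 i) + sumv ts'
        | (a, TConst c) :: ts' => a * c + sumv ts'
        end in
      cmp_eval o (sumv ts) k
  end.

Definition linevals (w : seq Sigma) (P : prog) : seq (nat -> bool) :=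
  foldl (fun vs f =>
           rcons vs (evf (fun j t => nth (fun _ => false) vs j t) w f)) [::] P.

(* w |= P iff the last line holds at position |w| *)
Definition accepts (P : prog) (w : seq Sigma) : bool :=
  last (fun _ => false) (linevals w P) (size w).

Definition equiv_prog (P Q : prog) : Prop := forall w, accepts P w = accepts Q w.

Fixpoint wff (b : nat) (f : form) : bool :=
  match f with
  | FLet _ => true
  | FNot g => wff b g
  | FAnd g h => wff b g && wff b h
  | FRef j => j < b
  | FCmp ts _ _ =>
      let fix wfts (ts : seq (nat * term form)) : bool :=
        match ts with
        | [::] => true
        | (_, TCount g) :: ts' => wff b g && wfts ts'
        | (_, TConst _) :: ts' => wfts ts'
        end in wfts ts
  end.

Definition wf_prog (P : prog) : bool :=
  all (fun i => wff i (nth (FRef 0) P i)) (iota 0 (size P)).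

(* ---------- size (constants in binary, each reference counts 1) ---------- *)
Definition bits (n : nat) : nat := if n is 0 then 1 else (trunc_log 2 n).+1.

Fixpoint fsize (f : form) : nat :=
  match f with
  | FLet _ => 1
  | FNot g => (fsize g).+1
  | FAnd g h => (fsize g + fsize h).+1
  | FRef _ => 1
  | FCmp ts _ k =>
      let fix szts (ts : seq (nat * term form)) : nat :=
        match ts with
        | [::] => 0
        | (a, TCount g) :: ts' => bits a + (fsize g).+2 + szts ts'
        | (a, TConst c) :: ts' => bits a + bits c + 1 + szts ts'
        end in szts ts + 1 + bits k
  end.

Definition prog_size (P : prog) : nat := sumn (map fsize P).

Fixpoint fdepth (denv : nat -> nat) (f : form) : nat :=
  match f with
  | FLet _ => 0
  | FNot g => fdepth denv g
  | FAnd g h => maxn (fdepth denv g) (fdepth denv h)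
  | FRef j => denv j
  | FCmp ts _ _ =>
      let fix dts (ts : seq (nat * term form)) : nat :=
        match ts with
        | [::] => 0
        | (_, TCount g) :: ts' => maxn (fdepth denv g).+1 (dts ts')
        | (_, TConst _) :: ts' => dts ts'
        end in dts ts
  end.

Definition line_depths (P : prog) : seq nat :=
  foldl (fun ds f => rcons ds (fdepth (fun j => nth 0 ds j) f)) [::] P.

Definition prog_depth (P : prog) : nat := \max_(d <- line_depths P) d.

Fixpoint fmaxconst (f : form) : option nat :=
  let omax (x y : option nat) :=
      match x, y with
      | Some a, Some b => Some (maxn a b)
      | Some a, None => Some a
      | None, y => y
      end in
  match f with
  | FLet _ => None
  | FNot g => fmaxconst g
  | FAnd g h => omax (fmaxconst g) (fmaxconst h)
  | FRef _ => None
  | FCmp ts _ k =>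
      let fix cts (ts : seq (nat * term form)) : option nat :=
        match ts with
        | [::] => Some k
        | (a, TCount g) :: ts' => omax (Some a) (omax (fmaxconst g) (cts ts'))
        | (a, TConst c) :: ts' => omax (Some (maxn a c)) (cts ts')
        end in cts ts
  end.

(* precision = number of bits of the largest constant (0 if no constant occurs) *)
Definition prog_prec (P : prog) : nat :=
  \max_(f <- P) (if fmaxconst f is Some c then bits c else 0).

Fixpoint fgirth (f : form) : nat :=
  match f with
  | FLet _ => 0
  | FNot g => fgirth g
  | FAnd g h => maxn (fgirth g) (fgirth h)
  | FRef _ => 0
  | FCmp ts _ _ =>
      let fix gts (ts : seq (nat * term form)) : nat :=
        match ts with
        | [::] => 0
        | (_, TCount g) :: ts' => maxn (fgirth g) (gts ts')
        | (_, TConst _) :: ts' => gts ts'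
        end in maxn (size ts) (gts ts)
  end.

Definition prog_girth (P : prog) : nat := \max_(f <- P) fgirth f.

Fixpoint fdecomposed (f : form) : bool :=
  match f with
  | FLet _ => true
  | FNot g => fdecomposed g
  | FAnd g h => fdecomposed g && fdecomposed h
  | FRef _ => true
  | FCmp ts o _ =>
      is_CGe o &&
      match ts with
      | [:: (1, TCount g)] => fdecomposed g
      | _ => false
      end
  end.

Definition decomposed (P : prog) : bool := all fdecomposed P.

End CRASP.

From mathcomp Require Import all_boot zify ring.
From Stdlib Require Import FunctionalExtensionality.
Set Implicit Arguments. Unset Strict Implicit. Unset Printing Implicit Defensive.

(* Every comparison [sum_t a_t * t ~ k] is replaced by a case split on the values of
   its counts, each count capped at [K = k + 1]: either [#[g] >= K], or [#[g] = v] for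
   some [v < K], written [#[g] >= v /\ ~ #[g] >= v + 1]; each case fixes the value of
   the sum, hence the truth value of the comparison.  Capping is harmless because a
   summand [a * #[g]] with [a > 0] and [#[g] > k] already exceeds [k].  A comparison
   with [g] summands and constants of [p] bits thus turns into at most [(2^p + 1)^g] cases,
   each containing at most two copies of every (recursively decomposed) counted
   subformula, so the size grows by a factor [2^O(p g)] per level of counting depth,
   the depth does not grow, and constants grow by at most one. *)

Lemma bits_gt0 n : 0 < bits n.
Proof. by case: n. Qed.

Lemma bits_lt n : n < 2 ^ bits n.
Proof. by case: n => [|n] //; apply: trunc_log_ltn. Qed.

Lemma bits_le n : bits n <= n.+1.
Proof.
case: n => [|n] //; rewrite /bits ltnS.
have := trunc_logP (erefl : 1 < 2) (ltn0Sn n).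
have := ltn_expl (trunc_log 2 n.+1) (erefl : 1 < 2); lia.
Qed.

Lemma bits_mono m n : m <= n -> bits m <= bits n.
Proof.
case: m => [|m] lemn; first exact: bits_gt0.
by case: n lemn => [|n] // lemn; rewrite /bits ltnS leq_trunc_log.
Qed.

Lemma bits_maxn m n : bits (maxn m n) = maxn (bits m) (bits n).
Proof.
case: leqP => [lemn | /ltnW lenm].
- by rewrite (maxn_idPr (bits_mono lemn)).
- by rewrite (maxn_idPl (bits_mono lenm)).
Qed.

Lemma bits_succ n : bits n.+1 <= (bits n).+1.
Proof.
rewrite /bits ltnS -(@leq_exp2l 2) //.
apply: leq_trans (trunc_logP _ _) (bits_lt n) => //.
Qed.

Lemma leq_expn2r m1 m2 e : m1 <= m2 -> m1 ^ e <= m2 ^ e.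
Proof. by move=> le_m; case: e => [|e] //; rewrite leq_exp2r. Qed.

(* The maximum used locally in [fmaxconst], to which it unfolds by conversion. *)
Definition omax (x y : option nat) : option nat :=
  match x, y with
  | Some a, Some b => Some (maxn a b)
  | Some a, None => Some a
  | None, y => y
  end.

Definition obits (x : option nat) : nat := if x is Some c then bits c else 0.

Lemma obits_omax x y : obits (omax x y) = maxn (obits x) (obits y).
Proof. by case: x => [a|]; case: y => [b|]; rewrite /= ?bits_maxn ?maxn0 ?max0n. Qed.

Lemma has_eq_andb (x : nat) (Q : pred nat) s :
  has (fun v => (x == v) && Q v) s = (x \in s) && Q x.
Proof.
apply/hasP/andP => [[v vs /andP[/eqP-> Qv]] // | [xs Qx]].
by exists x; rewrite ?eqxx.
Qed.

Lemma leq_sumn_map (T : Type) (F1 F2 : T -> nat) (s : seq T) :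
  all (fun x => F1 x <= F2 x) s -> sumn (map F1 s) <= sumn (map F2 s).
Proof. by elim: s => //= x s IH /andP[le12 /IH]; apply: leq_add. Qed.

Lemma sumn_map_mulr (T : Type) (F : T -> nat) (c : nat) (s : seq T) :
  sumn [seq F x * c | x <- s] = sumn (map F s) * c.
Proof. by elim: s => //= x s ->; rewrite mulnDl. Qed.

Lemma sumn_map_le_const (T : Type) (F : T -> nat) (c : nat) (s : seq T) :
  all (fun x => F x <= c) s -> sumn (map F s) <= size s * c.
Proof. by elim: s => //= x s IH /andP[lec /IH]; rewrite mulSn; apply: leq_add. Qed.

Lemma bigmax_le_pointwise (s1 s2 : seq nat) :
  size s1 = size s2 -> (forall j, nth 0 s1 j <= nth 0 s2 j) ->
  \max_(x <- s1) x <= \max_(x <- s2) x.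
Proof.
elim: s1 s2 => [|x s1 IH] [|y s2] //= [/IH le12] le_s; rewrite !big_cons.
by have /= := le_s 0; have := le12 (fun j => le_s j.+1); lia.
Qed.

Lemma all_leq_bigmax (T : Type) (F : T -> nat) (s : seq T) :
  all (fun x => F x <= \max_(y <- s) F y) s.
Proof.
elim: s => //= x s IH; rewrite big_cons leq_maxl /=.
by apply: sub_all IH => y /leq_trans; apply; rewrite leq_maxr.
Qed.

Section Decompose.
Variables (Sigma : eqType) (a0 : Sigma).
Local Notation form := (form Sigma).
Local Notation terms := (seq (nat * term form)).

Fixpoint all_counted (Q : form -> Prop) (ts : terms) : Prop :=
  match ts with
  | [::] => True
  | (_, TCount g) :: ts' => Q g /\ all_counted Q ts'
  | (_, TConst _) :: ts' => all_counted Q ts'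
  end.

Lemma all_counted_impl (Q1 Q2 : form -> Prop) ts :
  (forall g, Q1 g -> Q2 g) -> all_counted Q1 ts -> all_counted Q2 ts.
Proof. by move=> Q12; elim: ts => [|[a [g|c]] ts IH] //= [/Q12 ? /IH ?]. Qed.

Lemma all_counted_impl2 (Q1 Q2 Q3 : form -> Prop) ts :
  (forall g, Q1 g -> Q2 g -> Q3 g) ->
  all_counted Q1 ts -> all_counted Q2 ts -> all_counted Q3 ts.
Proof. by move=> Q123; elim: ts => [|[a [g|c]] ts IH] //= [? ?] [? ?]; split; auto. Qed.

Lemma all_counted_and (Q1 Q2 : form -> Prop) ts :
  all_counted Q1 ts -> all_counted Q2 ts -> all_counted (fun g => Q1 g /\ Q2 g) ts.
Proof. exact: all_counted_impl2. Qed.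

Section FormCountedInd.
Variable Q : form -> Prop.
Hypothesis Q_let : forall b, Q (FLet b).
Hypothesis Q_not : forall g, Q g -> Q (FNot g).
Hypothesis Q_and : forall g h, Q g -> Q h -> Q (FAnd g h).
Hypothesis Q_ref : forall j, Q (FRef Sigma j).
Hypothesis Q_cmp : forall ts o k, all_counted Q ts -> Q (FCmp ts o k).

Fixpoint form_counted_ind (f : form) : Q f :=
  match f with
  | FLet b => Q_let b
  | FNot g => Q_not (form_counted_ind g)
  | FAnd g h => Q_and (form_counted_ind g) (form_counted_ind h)
  | FRef j => Q_ref j
  | FCmp ts o k => Q_cmp o k
      ((fix all_ind (ts : terms) : all_counted Q ts :=
         match ts return all_counted Q ts with
         | [::] => I
         | (_, TCount g) :: ts' => conj (form_counted_ind g) (all_ind ts')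
         | (_, TConst _) :: ts' => all_ind ts'
         end) ts)
  end.
End FormCountedInd.

Definition map_counted (h : form -> form) (ts : terms) : terms :=
  [seq (t.1, if t.2 is TCount g then TCount (h g) else t.2) | t <- ts].

Lemma all_counted_map (Q : form -> Prop) h ts :
  all_counted (fun g => Q (h g)) ts -> all_counted Q (map_counted h ts).
Proof. by elim: ts => [|[a [g|c]] ts IH] //= [? /IH]. Qed.

Lemma size_map_counted h ts : size (map_counted h ts) = size ts.
Proof. exact: size_map. Qed.

Definition fFalse : form := FAnd (FLet a0) (FNot (FLet a0)).
Definition fOr (x y : form) : form := FNot (FAnd (FNot x) (FNot y)).
Definition fBigOr (l : seq form) : form := foldr fOr fFalse l.
Definition fAtLeast (g : form) (c : nat) : form := FCmp [:: (1, TCount g)] CGe c.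
Definition fExactly (g : form) (v : nat) : form :=
  FAnd (fAtLeast g v) (FNot (fAtLeast g v.+1)).

Fixpoint capped_cases (K : nat) (ts : terms) (P : nat -> bool) : form :=
  match ts with
  | [::] => if P 0 then FNot fFalse else fFalse
  | (a, TConst c) :: ts' => capped_cases K ts' (fun s => P (a * c + s))
  | (a, TCount g) :: ts' =>
      fBigOr (FAnd (fAtLeast g K) (capped_cases K ts' (fun s => P (a * K + s))) ::
              [seq FAnd (fExactly g v) (capped_cases K ts' (fun s => P (a * v + s)))
              | v <- iota 0 K])
  end.

Fixpoint decompose (f : form) : form :=
  match f with
  | FNot g => FNot (decompose g)
  | FAnd g h => FAnd (decompose g) (decompose h)
  | FCmp ts o k => capped_cases k.+1 (map_counted decompose ts) (fun s => cmp_eval o s k)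
  | _ => f
  end.

Lemma decompose_cmp ts o k :
  decompose (FCmp ts o k) =
  capped_cases k.+1 (map_counted decompose ts) (fun s => cmp_eval o s k).
Proof. by []. Qed.

Lemma capped_cases_count K a g ts P :
  capped_cases K ((a, TCount g) :: ts) P =
  fBigOr (FAnd (fAtLeast g K) (capped_cases K ts (fun s => P (a * K + s))) ::
          [seq FAnd (fExactly g v) (capped_cases K ts (fun s => P (a * v + s)))
          | v <- iota 0 K]).
Proof. by []. Qed.

Lemma capped_cases_closed (G H : form -> Prop) K :
  G fFalse -> (forall x, G x -> G (FNot x)) ->
  (forall x y, G x -> G y -> G (FAnd x y)) ->
  (forall g c, c <= K -> H g -> G (fAtLeast g c)) ->
  forall ts P, all_counted H ts -> G (capped_cases K ts P).
Proof.
move=> G_false G_not G_and G_atleast.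
have G_or x y : G x -> G y -> G (fOr x y) by move=> Gx Gy; apply/G_not/G_and; apply: G_not.
have G_bigor (F : nat -> form) s :
    (forall v, v \in s -> G (F v)) -> G (fBigOr (map F s)).
  elim: s => //= v s IH Gs; apply: (G_or); first by apply: Gs; rewrite mem_head.
  by apply: IH => u us; apply: Gs; rewrite inE us orbT.
elim=> [|[a [g|c]] ts IH] P //=; last exact: IH.
- by case: (P 0); auto.
case=> Hg Hts; apply: (G_or); first by apply: (G_and); auto.
apply: G_bigor => v; rewrite mem_iota add0n => /andP[_ ltvK].
apply: (G_and); last exact: IH.
by apply: (G_and); [|apply: (G_not)]; apply: (G_atleast) => //; apply: ltnW.
Qed.

Fixpoint tsum (cnt : form -> nat) (ts : terms) : nat :=
  match ts with
  | [::] => 0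
  | (a, TCount g) :: ts' => a * cnt g + tsum cnt ts'
  | (a, TConst c) :: ts' => a * c + tsum cnt ts'
  end.

Lemma tsum_map_counted cnt h ts :
  tsum cnt (map_counted h ts) = tsum (fun g => cnt (h g)) ts.
Proof. by elim: ts => [|[a [g|c]] ts IH] //=; rewrite IH. Qed.

Lemma eq_tsum cnt1 cnt2 ts :
  all_counted (fun g => cnt1 g = cnt2 g) ts -> tsum cnt1 ts = tsum cnt2 ts.
Proof. by elim: ts => [|[a [g|c]] ts IH] //= => [[-> /IH ->] | /IH ->]. Qed.

Lemma tsum_min_le cnt K ts : tsum (fun g => minn (cnt g) K) ts <= tsum cnt ts.
Proof.
elim: ts => [|[a [g|c]] ts IH] //=; rewrite ?leq_add2l //.
by apply: leq_add IH; rewrite leq_mul2l geq_minl orbT.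
Qed.

Lemma tsum_min_eq_or_gt cnt k ts :
  let s := tsum (fun g => minn (cnt g) k.+1) ts in s = tsum cnt ts \/ k < s.
Proof.
elim: ts => [|[a [g|c]] ts IH] /=; [by left | | lia].
case: (leqP (cnt g) k.+1) => _; first lia.
case: a => [|a]; [lia | right; nia].
Qed.

Lemma cmp_eval_gt o k m n : k < m -> k < n -> cmp_eval o m k = cmp_eval o n k.
Proof. by move=> ltkm ltkn; case: o => /=; apply/idP/idP; lia. Qed.

Lemma cmp_eval_capped o k cnt ts :
  cmp_eval o (tsum (fun g => minn (cnt g) k.+1) ts) k = cmp_eval o (tsum cnt ts) k.
Proof.
case: (tsum_min_eq_or_gt cnt k ts) => [-> // | gtk].
by apply: cmp_eval_gt => //; apply: leq_trans gtk (tsum_min_le _ _ _).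
Qed.

Section Semantics.
Variables (env : nat -> nat -> bool) (w : seq Sigma).

Definition counts (i : nat) (g : form) : nat := count (evf env w g) (iota 1 i).

Lemma evf_cmp ts o k i : evf env w (FCmp ts o k) i = cmp_eval o (tsum (counts i) ts) k.
Proof. by rewrite /=; congr cmp_eval; elim: ts => [|[a [g|c]] ts /= ->]. Qed.

Lemma evf_fFalse i : evf env w fFalse i = false.
Proof. by rewrite /= andbN. Qed.

Lemma evf_fBigOr l i : evf env w (fBigOr l) i = has (fun f => evf env w f i) l.
Proof. by elim: l => [|f l /= <-]; [apply: evf_fFalse | rewrite negb_and !negbK]. Qed.

Lemma evf_capped_cases K ts P i :
  evf env w (capped_cases K ts P) i = P (tsum (fun g => minn (counts i g) K) ts).
Proof.
elim: ts P => [|[a [g|c]] ts IH] P; last exact: IH.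
  by rewrite /=; case: (P 0); rewrite /= andbN.
rewrite capped_cases_count evf_fBigOr /= mul1n addn0 -/(counts i g) IH.
set x := counts i g; set s := tsum _ ts.
rewrite has_map (@eq_has _ _ (fun v => (x == v) && P (a * v + s))); last first.
  by move=> v /=; rewrite mul1n addn0 -/x IH -leqNgt -eqn_leq eq_sym.
rewrite has_eq_andb mem_iota /=.
by case: (ltnP x K); rewrite /= ?orbF.
Qed.

Lemma evf_decompose f i : evf env w (decompose f) i = evf env w f i.
Proof.
elim/form_counted_ind: f i => [b|g IH|g h IHg IHh|j|ts o k IH] i //.
- by rewrite /= IH.
- by rewrite /= IHg IHh.
rewrite decompose_cmp evf_capped_cases evf_cmp tsum_map_counted.
rewrite -(cmp_eval_capped o k (counts i)); congr cmp_eval.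
apply: eq_tsum; apply: all_counted_impl IH => g IHg.
by rewrite /counts (eq_count (fun j => IHg j)).
Qed.

End Semantics.

Lemma wff_cmp b ts o k : wff b (FCmp ts o k) <-> all_counted (wff b) ts.
Proof.
rewrite /=; elim: ts => [|[a [g|c]] ts IH] //=.
by rewrite -IH; split => [/andP | [-> ->]].
Qed.

Lemma wff_decompose b f : wff b f -> wff b (decompose f).
Proof.
elim/form_counted_ind: f => [x|g IH|g h IHg IHh|j|ts o k IH] //.
- by case/andP => /IHg /= -> /IHh ->.
move/wff_cmp => wf_ts; rewrite decompose_cmp.
apply: (capped_cases_closed (G := wff b) (H := wff b)) => //.
- by move=> x y /= -> ->.
- by move=> g c _ /= ->.
by apply: all_counted_map; apply: all_counted_impl2 IH wf_ts => g; apply.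
Qed.

Lemma fdecomposed_decompose f : fdecomposed (decompose f).
Proof.
elim/form_counted_ind: f => [x|g IH|g h IHg IHh|j|ts o k IH] //; first by rewrite /= IHg IHh.
rewrite decompose_cmp.
apply: (capped_cases_closed (G := @fdecomposed _) (H := @fdecomposed _)) => //.
  by move=> x y /= -> ->.
exact: all_counted_map.
Qed.

Lemma fdepth_cmp denv ts o k m :
  fdepth denv (FCmp ts o k) <= m <-> all_counted (fun g => fdepth denv g < m) ts.
Proof.
rewrite /=; elim: ts => [|[a [g|c]] ts IH] //=.
by rewrite geq_max -IH; split => [/andP | [-> ->]].
Qed.

Lemma fdepth_mono d1 d2 (f : form) : (forall j, d1 j <= d2 j) -> fdepth d1 f <= fdepth d2 f.
Proof.
move=> le_d12; elim/form_counted_ind: f => [x|g IH|g h IHg IHh|j|ts o k IH] //.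
- by rewrite /= geq_max !leq_max IHg IHh orbT.
- exact: le_d12.
have /fdepth_cmp lt_ts := leqnn (fdepth d2 (FCmp ts o k)).
by apply/fdepth_cmp; apply: all_counted_impl2 IH lt_ts => g; apply: leq_ltn_trans.
Qed.

Lemma fdepth_decompose denv (f : form) : fdepth denv (decompose f) <= fdepth denv f.
Proof.
elim/form_counted_ind: f => [x|g IH|g h IHg IHh|j|ts o k IH] //.
- by rewrite /= geq_max !leq_max IHg IHh orbT.
have /fdepth_cmp lt_ts := leqnn (fdepth denv (FCmp ts o k)).
rewrite decompose_cmp; set m := fdepth denv (FCmp ts o k).
apply: (capped_cases_closed (G := fun x => fdepth denv x <= m)
                            (H := fun g => fdepth denv g < m)) => //.
- by move=> x y /= ? ?; rewrite geq_max; apply/andP.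
- by apply: all_counted_map; apply: all_counted_impl2 IH lt_ts => g; apply: leq_ltn_trans.
Qed.

Lemma fgirth_cmp ts o k m :
  fgirth (FCmp ts o k) <= m <-> size ts <= m /\ all_counted (fun g => fgirth g <= m) ts.
Proof.
rewrite /= geq_max; split => [/andP[-> gts] | [-> gts]] /=; [split => //|]; move: gts;
  elim: ts {o k} => [|[a [g|c]] ts IH] //=; rewrite geq_max.
- by case/andP => -> /IH.
- by case=> -> /IH ->.
Qed.

Definition fprec (f : form) : nat := obits (fmaxconst f).

Lemma fprec_and g h : fprec (FAnd g h) = maxn (fprec g) (fprec h).
Proof. exact: obits_omax. Qed.

Lemma fprec_fAtLeast g c : fprec (fAtLeast g c) = maxn 1 (maxn (fprec g) (bits c)).
Proof. by rewrite -[LHS]/(obits (omax (Some 1) (omax (fmaxconst g) (Some c)))) !obits_omax. Qed.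

Lemma fprec_cmp_le ts o k m :
  fprec (FCmp ts o k) <= m -> bits k <= m /\ all_counted (fun g => fprec g <= m) ts.
Proof.
elim: ts => [|[a [g|c]] ts IH] //.
- rewrite -[fprec _]/(obits (omax (Some a) (omax (fmaxconst g) (fmaxconst (FCmp ts o k))))).
  by rewrite !obits_omax !geq_max => /and3P[_ leg /IH[]].
- rewrite -[fprec _]/(obits (omax (Some (maxn a c)) (fmaxconst (FCmp ts o k)))).
  by rewrite obits_omax geq_max => /andP[_ /IH].
Qed.

Lemma fprec_decompose f : fprec (decompose f) <= 2 * fprec f.
Proof.
elim/form_counted_ind: f => [x|g IH|g h IHg IHh|j|ts o k IH] //.
- by rewrite [decompose _]/= !fprec_and; move: IHg IHh; lia.
set m := fprec (FCmp ts o k); have [le_km le_ts] := fprec_cmp_le (leqnn m).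
rewrite decompose_cmp; apply: (capped_cases_closed (G := fun x => fprec x <= 2 * m)
                                                   (H := fun g => fprec g <= 2 * m)) => //.
- by move=> x y; rewrite fprec_and geq_max => -> ->.
- move=> g c lec leg; rewrite fprec_fAtLeast !geq_max leg /=.
  by have := bits_mono lec; have := bits_succ k; have := bits_gt0 k; lia.
by apply: all_counted_map; apply: all_counted_impl2 IH le_ts => g; lia.
Qed.

Lemma fsize_gt0 (f : form) : 0 < fsize f.
Proof. by case: f => //= ts o k; rewrite addn1 addSn. Qed.

Fixpoint terms_size (ts : terms) : nat :=
  match ts with
  | [::] => 0
  | (a, TCount g) :: ts' => bits a + (fsize g).+2 + terms_size ts'
  | (a, TConst c) :: ts' => bits a + bits c + 1 + terms_size ts'
  end.

Lemma fsize_cmp ts o k : fsize (FCmp ts o k) = terms_size ts + 1 + bits k.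
Proof. by rewrite /=; congr (_ + _ + _); elim: ts => [|[a [g|c]] ts /= ->]. Qed.

Lemma fsize_fBigOr l : fsize (fBigOr l) = sumn [seq fsize x + 4 | x <- l] + 4.
Proof. by elim: l => [|x l /= ->] //; lia. Qed.

(* A counted [g] contributes a bound on one branch [#[g] = v] of its case split (two
   copies of [g], constants at most [K]), recursive part excluded. *)
Fixpoint weight (K : nat) (ts : terms) : nat :=
  match ts with
  | [::] => 0
  | (_, TCount g) :: ts' => 2 * fsize g + 2 * K + 17 + weight K ts'
  | (_, TConst _) :: ts' => weight K ts'
  end.

Lemma fsize_capped_cases K ts P :
  fsize (capped_cases K ts P) <= (K + 5) ^ size ts * (5 + weight K ts).
Proof.
elim: ts P => [|[a [g|c]] ts IH] P; first by rewrite /=; case: (P 0).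
- rewrite capped_cases_count fsize_fBigOr /= trunc_log1.
  set D := (K + 5) ^ size ts * (5 + weight K ts).
  set branch := fun v => FAnd (fExactly g v) (capped_cases K ts (fun s => P (a * v + s))).
  have le_rest : sumn [seq fsize x + 4 | x <- map branch (iota 0 K)]
                 <= K * (2 * fsize g + 2 * K + 16 + D).
    apply: leq_trans (sumn_map_le_const _) _; last by rewrite size_map size_iota.
    rewrite all_map; apply/allP => v; rewrite mem_iota add0n => /andP[_ ltvK] /=.
    rewrite trunc_log1 -/(bits v.+1).
    by have := IH (fun s => P (a * v + s)); have := bits_le v; have := bits_le v.+1; lia.
  move: le_rest (IH (fun s => P (a * K + s))); rewrite expnS.
  have := bits_le K; have : 0 < (K + 5) ^ size ts by rewrite expn_gt0 addnS.
  rewrite /D; set E := (K + 5) ^ size ts; set S := sumn _; set F := fsize _; nia.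
- by apply: leq_trans (IH _) _; rewrite /= expnS -mulnA leq_pmull // addnS.
Qed.

Lemma weight_map_counted K A ts :
  0 < A -> all_counted (fun g => fsize (decompose g) <= fsize g * A) ts ->
  weight K (map_counted decompose ts) <= (2 * A + 2 * K + 17) * terms_size ts.
Proof.
move=> A_gt0; elim: ts => [|[a [g|c]] ts IH] //=; last by move/IH; nia.
by case=> le_g /IH; have := fsize_gt0 g; move: le_g; nia.
Qed.

Definition blowup (p g : nat) : nat := (2 ^ p + 5) ^ g * (2 * 2 ^ p + 24).

Lemma blowup_gt0 p g : 0 < blowup p g.
Proof. by rewrite muln_gt0 expn_gt0 !addnS. Qed.

Lemma fsize_decompose p g n f :
  fprec f <= p -> fgirth f <= g -> fdepth (fun _ => 0) f <= n ->
  fsize (decompose f) <= fsize f * blowup p g ^ n.+1.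
Proof.
have pow_gt0 e : 0 < blowup p g ^ e by rewrite expn_gt0 blowup_gt0.
elim/form_counted_ind: f n => [x|h IH|h1 h2 IH1 IH2|j|ts o k IH] n.
- by rewrite mul1n pow_gt0.
- move=> le_p le_g le_d; have := IH n le_p le_g le_d; have := pow_gt0 n.+1.
  by rewrite /= mulSn; lia.
- rewrite fprec_and /= !geq_max => /andP[le_p1 le_p2] /andP[le_g1 le_g2] /andP[le_d1 le_d2].
  have := IH1 n le_p1 le_g1 le_d1; have := IH2 n le_p2 le_g2 le_d2; have := pow_gt0 n.+1.
  by rewrite mulSn mulnDl; lia.
- by rewrite mul1n pow_gt0.
move=> /fprec_cmp_le[le_k le_ts] /fgirth_cmp[le_size le_girths] /fdepth_cmp le_depths.
have IHts : all_counted (fun h => fsize (decompose h) <= fsize h * blowup p g ^ n) ts.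
  apply: all_counted_impl2 IH (all_counted_and le_ts (all_counted_and le_girths le_depths)).
  move=> h IHh [le_p [le_g lt_d]]; have n_gt0 : 0 < n := leq_ltn_trans (leq0n _) lt_d.
  by rewrite -(prednK n_gt0); apply: IHh; rewrite // -ltnS (prednK n_gt0).
have le_w := weight_map_counted k.+1 (pow_gt0 n) IHts.
have lt_k : k < 2 ^ p := leq_trans (bits_lt k) (leq_pexp2l (erefl : 0 < 2) le_k).
have le_pow : (k.+1 + 5) ^ size ts <= (2 ^ p + 5) ^ g.
  apply: leq_trans (leq_expn2r _ _) (leq_pexp2l _ le_size); last by rewrite addnS.
  by rewrite leq_add2r.
rewrite decompose_cmp fsize_cmp; apply: leq_trans (fsize_capped_cases _ _ _) _.
rewrite size_map_counted expnS /blowup; move: le_w le_pow (pow_gt0 n) lt_k.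
set A := blowup p g ^ n; set E := (k.+1 + 5) ^ _; set E' := (2 ^ p + 5) ^ g.
set W := weight _ _; set S := terms_size ts; set K := 2 ^ p.
clearbody A E E' W S K => le_w le_pow A_gt0 lt_k.
have le_rest : 5 + W <= (S + 1) * (A * (2 * K + 24)).
  apply: leq_trans (_ : _ <= (S + 1) * (2 * A + 2 * k + 24)) _; first by clear -le_w; nia.
  by rewrite leq_mul2l; apply/orP; right; clear -A_gt0 lt_k; nia.
apply: leq_trans (leq_mul le_pow le_rest) _.
have -> : E' * ((S + 1) * (A * (2 * K + 24))) = (S + 1) * (E' * (2 * K + 24) * A) by ring.
by rewrite leq_mul2r leq_addr orbT.
Qed.

Lemma linevals_decompose w (P : prog Sigma) : linevals w (map decompose P) = linevals w P.
Proof.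
rewrite /linevals; elim: P [::] => //= f P IH vs; rewrite IH; congr (foldl _ (rcons _ _) _).
by apply: functional_extensionality => i; apply: evf_decompose.
Qed.

Lemma equiv_decompose (P : prog Sigma) : equiv_prog P (map decompose P).
Proof. by move=> w; rewrite /accepts linevals_decompose. Qed.

Lemma wf_prog_decompose (P : prog Sigma) : wf_prog P -> wf_prog (map decompose P).
Proof.
move=> /allP wfP; apply/allP => i; rewrite size_map => iP.
have := wfP i iP; rewrite mem_iota add0n in iP.
by rewrite (nth_map (FRef Sigma 0)) //; apply: wff_decompose.
Qed.

Lemma decomposed_decompose (P : prog Sigma) : decomposed (map decompose P).
Proof. by elim: P => //= f P ->; rewrite fdecomposed_decompose. Qed.

Definition depth_step (ds : seq nat) (f : form) : seq nat := rcons ds (fdepth (nth 0 ds) f).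

Lemma line_depthsE (P : prog Sigma) : line_depths P = foldl depth_step [::] P.
Proof. by []. Qed.

Lemma foldl_depth_step_decompose ds1 ds2 (P : prog Sigma) :
  size ds1 = size ds2 -> (forall j, nth 0 ds1 j <= nth 0 ds2 j) ->
  let ds1' := foldl depth_step ds1 (map decompose P) in
  let ds2' := foldl depth_step ds2 P in
  size ds1' = size ds2' /\ forall j, nth 0 ds1' j <= nth 0 ds2' j.
Proof.
elim: P ds1 ds2 => [|f P IH] ds1 ds2 eq_size le_ds //=.
apply: IH => [|j]; first by rewrite !size_rcons eq_size.
rewrite !nth_rcons eq_size; case: ltnP => // _; case: eqP => // _.
exact: leq_trans (fdepth_decompose _ _) (fdepth_mono _ le_ds).
Qed.

Lemma prog_depth_decompose (P : prog Sigma) : prog_depth (map decompose P) <= prog_depth P.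
Proof.
rewrite /prog_depth !line_depthsE.
have [] := foldl_depth_step_decompose P (erefl : size [::] = size [::]) (fun j => leqnn _).
exact: bigmax_le_pointwise.
Qed.

Lemma mem_foldl_depth_step ds (P : prog Sigma) x : x \in ds -> x \in foldl depth_step ds P.
Proof. by elim: P ds => //= f P IH ds x_ds; apply: IH; rewrite mem_rcons in_cons x_ds orbT. Qed.

Lemma fdepth0_le_prog_depth (P : prog Sigma) :
  all (fun f => fdepth (fun _ => 0) f <= prog_depth P) P.
Proof.
rewrite /prog_depth line_depthsE; elim: P [::] => //= f P IH ds; rewrite IH andbT.
apply: leq_trans (fdepth_mono _ (fun j => leq0n (nth 0 ds j))) _.
apply: (leq_bigmax_seq (F := id)) => //; apply: mem_foldl_depth_step.
by rewrite mem_rcons mem_head.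
Qed.

Lemma prog_prec_decompose (P : prog Sigma) : prog_prec (map decompose P) <= 2 * prog_prec P.
Proof.
rewrite /prog_prec big_map.
apply: (big_ind2 (fun x y => x <= 2 * y)) => // [x1 x2 y1 y2 *|f _]; first lia.
exact: fprec_decompose.
Qed.

Lemma prog_size_decompose (P : prog Sigma) :
  prog_size (map decompose P) <=
  prog_size P * blowup (prog_prec P) (prog_girth P) ^ (prog_depth P).+1.
Proof.
rewrite /prog_size -map_comp -sumn_map_mulr; apply: leq_sumn_map.
have := introT and3P (And3 (fdepth0_le_prog_depth P) (all_leq_bigmax (@fgirth _) P)
                            (all_leq_bigmax fprec P)).
rewrite -!all_predI; apply: sub_all => f /and3P[le_d le_g le_p].
exact: fsize_decompose.
Qed.

End Decompose.

Lemma blowup_le p g d : blowup p g ^ d.+1 <= 2 ^ (8 * (p + g + d).+1 ^ 3).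
Proof.
have le_base : blowup p g <= 2 ^ ((p + 3) * g + (p + 5)).
  rewrite /blowup expnD expnM; have pow_gt0 := expn_gt0 2 p.
  by apply: leq_mul; [apply: leq_expn2r|]; rewrite expnD; lia.
apply: leq_trans (leq_expn2r _ le_base) _; rewrite -expnM leq_exp2l //; nia.
Qed.

Theorem lemma4p2 :
  exists (C e : nat),
  forall (Sigma : finType) (P : prog Sigma),
    0 < #|Sigma| ->
    wf_prog P ->
    exists P' : prog Sigma,
      [/\ wf_prog P' && decomposed P', equiv_prog P P',
          prog_size P' <= C * prog_size P *
              2 ^ (C * (prog_prec P + prog_girth P + prog_depth P).+1 ^ e),
          prog_depth P' <= C * prog_depth P
        & prog_prec P' <= C * prog_prec P].
Proof.
exists 8, 3 => Sigma P /card_gt0P[a0 _] wfP.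
exists (map (decompose a0) P); split.
- by rewrite wf_prog_decompose // decomposed_decompose.
- exact: equiv_decompose.
- apply: leq_trans (prog_size_decompose a0 P) _.
  by apply: leq_mul; [apply: leq_pmull | apply: blowup_le].
- by apply: leq_trans (prog_depth_decompose a0 P) _; rewrite leq_pmull.
- exact: leq_trans (prog_prec_decompose a0 P) (leq_mul _ (leqnn _)).
Qed.
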